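(* Let $\mu$ be a smooth volume form on $S^2$ and let $G$ be an abelian pseudo-rotation subgroup of $\mathrm{Symp}^\infty_\mu(S^2)$. Then either $\mathrm{Fix}(g)$ is the same set for every non-trivial $g\in G$, or $G$ is isomorphic to $\mathbb{Z}/2\mathbb{Z}\oplus\mathbb{Z}/2\mathbb{Z}$. In the latter case the fixed point sets of the non-trivial elements of $G$ are pairwise disjoint, so their union contains six points.
   Context: $\mathrm{Symp}^\infty_\mu(S^2)$ is the group of $C^\infty$ diffeomorphisms of $S^2$ isotopic to the identity and preserving $\mu$. A subgroup is a pseudo-rotation group if every non-trivial element has exactly $2$ fixed points. *)

(* S^2 is the Euclidean unit sphere in R^3 = 'rV[R]_3. *)
From HB Require Import structures.
From mathcomp Require Import all_boot all_order all_algebra.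
From mathcomp Require Import all_classical all_reals all_analysis.
Set Implicit Arguments. Unset Strict Implicit. Unset Printing Implicit Defensive.
Import Order.TTheory GRing.Theory Num.Theory.
Import numFieldNormedType.Exports.
Local Open Scope classical_set_scope.
Local Open Scope ring_scope.

Section Sphere.
Variable R : realType.

Definition dot3 (x y : 'rV[R]_3) : R := (x *m y^T) 0 0.

Definition on_sphere (x : 'rV[R]_3) : bool := dot3 x x == 1.
Definition S2 := {x : 'rV[R]_3 | on_sphere x}.
Definition sphere_set : set 'rV[R]_3 := [set x | on_sphere x].

Definition e3 (i : 'I_3) : 'rV[R]_3 := delta_mx 0 i.

Fixpoint iter_partial {W : normedModType R} (l : seq 'I_3)
  (F : 'rV[R]_3 -> W) : 'rV[R]_3 -> W :=
  match l with
  | [::] => F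
  | i :: l' => fun x => 'D_(e3 i) (iter_partial l' F) x
  end.

Definition smooth_on {W : normedModType R} (U : set 'rV[R]_3)
  (F : 'rV[R]_3 -> W) : Prop :=
  open U /\
  forall l : seq 'I_3,
    {within U, continuous (iter_partial l F)} /\
    (forall (i : 'I_3) x, U x -> derivable (iter_partial l F) x (e3 i)).

Definition smooth_ext (f : S2 -> S2) (F : 'rV[R]_3 -> 'rV[R]_3) : Prop :=
  exists U, sphere_set `<=` U /\ smooth_on U F /\
            forall x : S2, val (f x) = F (val x).

Definition smooth_map (f : S2 -> S2) : Prop := exists F, smooth_ext f F.

Definition diffeo (f : S2 -> S2) : Prop :=
  smooth_map f /\ exists g : S2 -> S2, smooth_map g /\ cancel f g /\ cancel g f.

Definition isotopic_to_id (f : S2 -> S2) : Prop :=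
  exists H : R -> S2 -> S2,
    (forall t, 0 <= t <= 1 -> diffeo (H t)) /\
    H 0 = id /\ H 1 = f /\
    (forall t0 (x0 : S2), 0 <= t0 <= 1 -> forall eps : R, 0 < eps ->
       exists2 delta : R, 0 < delta &
         forall t (x : S2), 0 <= t <= 1 -> `|t - t0| < delta ->
           `|val x - val x0| < delta ->
           `|val (H t x) - val (H t0 x0)| < eps).

Definition det3 (x u v : 'rV[R]_3) : R :=
  \det (\matrix_(i < 3, j < 3)
          (if i == 0 then x 0 j else if i == 1 then u 0 j else v 0 j)).

Definition tangent (x u : 'rV[R]_3) : Prop := dot3 x u = 0.

(* A smooth 2-form on S^2 is  mu_x(u,v) = rho(x) * det(x,u,v)  for u,v tangent
   at x, with rho smooth; it is a volume form iff rho vanishes nowhere on S^2. *)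
Definition volume_form (rho : 'rV[R]_3 -> R) : Prop :=
  (exists U, sphere_set `<=` U /\ smooth_on U rho) /\
  (forall x, on_sphere x -> rho x != 0).

Definition preserves_form (rho : 'rV[R]_3 -> R) (f : S2 -> S2) : Prop :=
  exists F, smooth_ext f F /\
    forall (x : S2) (u v : 'rV[R]_3), tangent (val x) u -> tangent (val x) v ->
      rho (val (f x)) * det3 (val (f x)) ('D_u F (val x)) ('D_v F (val x))
      = rho (val x) * det3 (val x) u v.

Definition Symp (rho : 'rV[R]_3 -> R) : set (S2 -> S2) :=
  [set f | diffeo f /\ isotopic_to_id f /\ preserves_form rho f].

Definition Fix (g : S2 -> S2) : set S2 := [set x | g x = x].

Definition is_subgroup (rho : 'rV[R]_3 -> R) (G : set (S2 -> S2)) : Prop :=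
  G `<=` Symp rho /\ G id /\
  (forall g h, G g -> G h -> G (g \o h)) /\
  (forall g, G g -> exists2 h, G h & g \o h = id /\ h \o g = id).

Definition abelian_set (G : set (S2 -> S2)) : Prop :=
  forall g h, G g -> G h -> g \o h = h \o g.

Definition pseudo_rotation_set (G : set (S2 -> S2)) : Prop :=
  forall g, G g -> g <> id ->
    exists a b : S2, a <> b /\ Fix g = [set a; b].

Definition iso_Z2xZ2 (G : set (S2 -> S2)) : Prop :=
  exists phi : bool * bool -> (S2 -> S2),
    injective phi /\ range phi = G /\
    forall a b : bool * bool,
      phi (a.1 (+) b.1, a.2 (+) b.2) = phi a \o phi b.

End Sphere.

(* Elements of an abelian group permute each other's fixed point sets, and a
   nontrivial element fixes at most two points.  So if two nontrivial elements
   g, h have different fixed pairs {a, b} and {c, d}, then h swaps a and b and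
   g swaps c and d; the four points are distinct, every k in G permutes both
   pairs, and k is determined by how it acts on a, b, c.  This makes every
   element an involution and identifies G with the Klein four group generated
   by g and h.  Two distinct nontrivial elements then always have different
   fixed pairs, and such pairs are disjoint since one element swaps the pair of
   the other. *)
From HB Require Import structures.
From mathcomp Require Import all_boot all_order all_algebra.
From mathcomp Require Import all_classical all_reals all_analysis.
Import Order.TTheory GRing.Theory Num.Theory.
Import numFieldNormedType.Exports.
Set Implicit Arguments. Unset Strict Implicit. Unset Printing Implicit Defensive.
Local Open Scope classical_set_scope.

Definition fixset (T : Type) (g : T -> T) : set T := [set x | g x = x].

Lemma fixset2P (T : Type) (g : T -> T) (a b : T) :
  fixset g = [set a; b] -> forall x, g x = x <-> x = a \/ x = b.
Proof. by move=> E x; rewrite -[g x = x]/(fixset g x) E. Qed.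

Section AbelianPseudoRotation.
Variables (T : Type) (G : set (T -> T)).
Hypothesis G_comp : forall g h, G g -> G h -> G (g \o h).
Hypothesis G_inv : forall g, G g -> exists2 h, G h & g \o h = id /\ h \o g = id.
Hypothesis G_comm : forall g h, G g -> G h -> g \o h = h \o g.
Hypothesis G_pseudo :
  forall g, G g -> g <> id -> exists a b : T, a <> b /\ fixset g = [set a; b].

Lemma mem_injective g : G g -> injective g.
Proof.
move=> /G_inv [g' _ [_ g'g]] x y gxy.
by rewrite -[x]/(id x) -[y]/(id y) -g'g /= gxy.
Qed.

Lemma fix3_id m a b c : G m -> m a = a -> m b = b -> m c = c ->
  a <> b -> a <> c -> b <> c -> m = id.
Proof.
move=> Gm ma mb mc ab ac bc; apply: contrapT => /(G_pseudo Gm) [p [q [_ E]]].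
have P := fixset2P E.
by case: (P a).1 => // Ha; case: (P b).1 => // Hb; case: (P c).1 => // Hc;
  congruence.
Qed.

Lemma comm_fixset k h x : G k -> G h -> k x = x -> k (h x) = h x.
Proof.
by move=> Gk Gh kx; have /= := congr1 (@^~ x) (G_comm Gk Gh); rewrite kx.
Qed.

Lemma fixset2_stable k h a b : G k -> G h -> a <> b ->
  fixset k = [set a; b] -> (h a = a /\ h b = b) \/ (h a = b /\ h b = a).
Proof.
move=> Gk Gh ab E; have P := fixset2P E.
have kha : k (h a) = h a by apply: comm_fixset => //; apply/P; left.
have khb : k (h b) = h b by apply: comm_fixset => //; apply/P; right.
have h_neq : h a <> h b by move/(mem_injective Gh).
by case: ((P (h a)).1 kha) => ha; case: ((P (h b)).1 khb) => hb;
  first [by left | by right | congruence].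
Qed.

(* If [h] fixed a and b, its own fixed pair would have to be {a, b}. *)
Lemma fixset2_swap g h a b : G g -> G h -> h <> id -> a <> b ->
  fixset g = [set a; b] -> fixset g <> fixset h -> h a = b /\ h b = a.
Proof.
move=> Gg Gh nh ab E gh; have P := fixset2P E.
case: (fixset2_stable Gg Gh ab E) => // [[ha hb]]; exfalso; apply: gh.
apply/seteqP; split=> x /= => [/P [] -> // | hx].
apply: contrapT => gx; apply: nh; apply: (fix3_id Gh ha hb hx ab).
- by move=> ax; apply: gx; rewrite -ax; apply/P; left.
- by move=> bx; apply: gx; rewrite -bx; apply/P; right.
Qed.

Lemma fixset_disjoint g h : G g -> G h -> g <> id -> h <> id ->
  fixset g <> fixset h -> fixset g `&` fixset h = set0.
Proof.
move=> Gg Gh ng nh gh; have [a [b [ab E]]] := G_pseudo Gg ng.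
have [ha hb] := fixset2_swap Gg Gh nh ab E gh.
apply/seteqP; split=> // x [/(fixset2P E) [] -> /=]; congruence.
Qed.

(* If [u] has another fixed pair {p, q}, then [g] and [h] both swap p and q, so
   [h^-1 \o g] fixes p as well as the common fixed pair of [g] and [h]. *)
Lemma fixset_inj u g h : G u -> G g -> G h -> u <> id -> g <> id -> h <> id ->
  fixset u <> fixset g -> fixset g = fixset h -> g = h.
Proof.
move=> Gu Gg Gh nu ng nh ug gh.
have [p [q [pq Eu]]] := G_pseudo Gu nu; have [a [b [ab Eg]]] := G_pseudo Gg ng.
have [gp _] := fixset2_swap Gu Gg ng pq Eu ug.
have [hp _] : h p = q /\ h q = p.
  by apply: (fixset2_swap Gu Gh nh pq Eu); rewrite -gh.
have [h' Gh' [hh' h'h]] := G_inv Gh.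
have h'_fix x : h x = x -> h' x = x.
  by move=> hx; have /= := congr1 (@^~ x) h'h; rewrite hx.
have [ga gb] : g a = a /\ g b = b by split; apply/(fixset2P Eg); [left|right].
have gh_fix x : g x = x -> h x = x by rewrite -[g x = x]/(fixset g x) gh.
have pa : a <> p by move=> ap; apply: pq; rewrite -gp -ap ga.
have pb : b <> p by move=> bp; apply: pq; rewrite -gp -bp gb.
have h'g : h' \o g = id.
  apply: (fix3_id (G_comp Gh' Gg) _ _ _ ab pa pb) => /=.
  - by rewrite ga h'_fix ?gh_fix.
  - by rewrite gb h'_fix ?gh_fix.
  - by rewrite gp -hp -[RHS]/(id p) -h'h.
by rewrite -[g]/(id \o g) -hh' -[RHS]/(h \o id) -h'g.
Qed.

Section KleinFour.
Variables (g h : T -> T) (a b c d : T).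
Hypotheses (Gg : G g) (Gh : G h) (ng : g <> id) (nh : h <> id).
Hypotheses (ab : a <> b) (cd : c <> d).
Hypotheses (fix_g : fixset g = [set a; b]) (fix_h : fixset h = [set c; d]).
Hypothesis gh : fixset g <> fixset h.

Let h_swap : h a = b /\ h b = a.
Proof. exact: fixset2_swap Gg Gh nh ab fix_g gh. Qed.
Let g_swap : g c = d /\ g d = c.
Proof. exact: fixset2_swap Gh Gg ng cd fix_h (nesym gh). Qed.
Let ga : g a = a. Proof. by apply/(fixset2P fix_g); left. Qed.
Let gb : g b = b. Proof. by apply/(fixset2P fix_g); right. Qed.
Let hc : h c = c. Proof. by apply/(fixset2P fix_h); left. Qed.
Let hd : h d = d. Proof. by apply/(fixset2P fix_h); right. Qed.
Let ac : a <> c. Proof. by move=> e; apply: ab; rewrite -h_swap.1 e hc. Qed.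
Let bc : b <> c. Proof. by move=> e; apply: ab; rewrite -h_swap.2 e hc. Qed.

Lemma mem_involutive k : G k -> k \o k = id.
Proof.
move=> Gk; have [[ka kb]|[ka kb]] := fixset2_stable Gg Gk ab fix_g;
  have [[kc kd]|[kc kd]] := fixset2_stable Gh Gk cd fix_h;
  by apply: (fix3_id (G_comp Gk Gk) _ _ _ ab ac bc); rewrite /= ?ka ?kb ?kc ?kd.
Qed.

Definition klein (p : bool * bool) : T -> T :=
  (if p.1 then g else id) \o (if p.2 then h else id).

Lemma klein_mem p : G (klein p).
Proof.
have Gid : G id by rewrite -(mem_involutive Gg); exact: G_comp.
by case: p => -[] []; apply: G_comp.
Qed.

Lemma klein_inj : injective klein.
Proof.
have [hab hba] := h_swap; have [gcd gdc] := g_swap.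
move=> [[] []] [[] []] E //;
  have := congr1 (@^~ a) E; have := congr1 (@^~ c) E;
  rewrite /klein /= ?hab ?hc ?ga ?gb ?gcd; congruence.
Qed.

(* [k] is pinned down by its action on a, b, c, which [klein p] can undo. *)
Lemma klein_surj k : G k -> exists p, klein p = k.
Proof.
move=> Gk; have [hab hba] := h_swap; have [gcd gdc] := g_swap.
have klein_eq p : klein p (k a) = a -> klein p (k b) = b -> klein p (k c) = c ->
    klein p = k.
  move=> fa fb fc.
  have e := fix3_id (G_comp (klein_mem p) Gk) fa fb fc ab ac bc.
  apply: funext => x.
  have /= <- := congr1 (@^~ (k x)) (mem_involutive (klein_mem p)).
  by have /= -> := congr1 (@^~ x) e.
case: (fixset2_stable Gg Gk ab fix_g) => -[ka kb];
case: (fixset2_stable Gh Gk cd fix_h) => -[kc kd];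
[exists (false, false) | exists (true, false) | exists (false, true)
 | exists (true, true)];
by apply: klein_eq;
  rewrite /klein /= ?ka ?kb ?kc ?kd ?ga ?gb ?hc ?hd ?hab ?hba ?gcd ?gdc.
Qed.

Lemma kleinD p q : klein (p.1 (+) q.1, p.2 (+) q.2) = klein p \o klein q.
Proof.
have gg x : g (g x) = x by have /= := congr1 (@^~ x) (mem_involutive Gg).
have hh x : h (h x) = x by have /= := congr1 (@^~ x) (mem_involutive Gh).
have gh_comm x : g (h x) = h (g x) by have /= := congr1 (@^~ x) (G_comm Gg Gh).
by case: p q => -[] [] [[] []]; apply: funext => x; rewrite /klein /= ?gg ?hh //
  ?gh_comm ?gg ?hh // -?gh_comm ?gg ?hh.
Qed.

Lemma fixset_neq g' h' : G g' -> G h' -> g' <> id -> h' <> id -> g' <> h' ->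
  fixset g' <> fixset h'.
Proof.
move=> Gg' Gh' ng' nh' g'h' E; apply: g'h'.
have [gg'|gg'] := pselect (fixset g = fixset g').
  by apply: (fixset_inj Gh Gg' Gh') => //; rewrite -gg'; apply: nesym.
exact: (fixset_inj Gg Gg' Gh').
Qed.

End KleinFour.

Theorem common_fixset_or_klein_four :
  (forall g h, G g -> G h -> g <> id -> h <> id -> fixset g = fixset h) \/
  ((exists phi : bool * bool -> T -> T, injective phi /\ range phi = G /\
     forall p q, phi (p.1 (+) q.1, p.2 (+) q.2) = phi p \o phi q) /\
   forall g h, G g -> G h -> g <> id -> h <> id -> g <> h ->
     fixset g `&` fixset h = set0).
Proof.
have [|not_common] := pselect (forall g h, G g -> G h -> g <> id -> h <> id ->
  fixset g = fixset h); [by left | right].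
have [g [h [Gg [Gh [ng [nh gh]]]]]] : exists g h, G g /\ G h /\ g <> id /\
    h <> id /\ fixset g <> fixset h.
  apply: contrapT => none; apply: not_common => g h Gg Gh ng nh.
  by apply: contrapT => gh; apply: none; exists g, h.
have [a [b [ab fix_g]]] := G_pseudo Gg ng.
have [c [d [cd fix_h]]] := G_pseudo Gh nh.
split.
  exists (klein g h); split.
    exact: klein_inj Gg Gh ng nh ab cd fix_g fix_h gh.
  split; last exact: kleinD Gg Gh nh ab cd fix_g fix_h gh.
  apply/seteqP; split=> [_ [p _ <-] | k Gk].
    exact: (klein_mem Gg Gh nh ab cd fix_g fix_h gh).
  by have [p <-] := klein_surj Gg Gh ng nh ab cd fix_g fix_h gh Gk; exists p.
move=> g' h' Gg' Gh' ng' nh' g'h'.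
apply: (fixset_disjoint Gg' Gh' ng' nh').
exact: (fixset_neq Gg Gh ng nh gh Gg' Gh' ng' nh' g'h').
Qed.

End AbelianPseudoRotation.

Local Open Scope ring_scope.

Theorem lemma5p9 (R : realType) (rho : 'rV[R]_3 -> R)
  (G : set (S2 R -> S2 R)) :
  volume_form rho -> is_subgroup rho G -> abelian_set G ->
  pseudo_rotation_set G ->
  (forall g h, G g -> G h -> g <> id -> h <> id -> Fix g = Fix h) \/
  (iso_Z2xZ2 G /\
   forall g h, G g -> G h -> g <> id -> h <> id -> g <> h ->
     Fix g `&` Fix h = set0).
Proof.
move=> _ [_ [_ [G_comp G_inv]]] G_comm G_pseudo.
exact: common_fixset_or_klein_four.
Qed.
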